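(* (Repeated insertion model.) For each $1\le x\le n$ let $\theta(\cdot,x)$ be a probability vector on $\{1,\ldots,x\}$, and define the distribution $p$ on $S_n$ by \[ p(\pi)=\prod_{x=1}^n\theta(r_x(\pi),x),\qquad r_x(\pi)=\bigl|\{j\le x:\ \pi^{-1}(j)\le\pi^{-1}(x)\}\bigr| \] (the position of $x$ in the relative order of $1,\ldots,x$ in the sequence $(\pi(1),\ldots,\pi(n))$). Then $p$ is bi-decomposable; in particular $p(\pi)=\prod_{k=0}^{n-1}\Lambda(\pi(k+1),\pi\{1:k\})$ with $\Lambda(x,C)=\theta(|C\cap\{1,\ldots,x\}|+1,x)$.
   Context: $S_n$ is the group of permutations of $\{1,\ldots,n\}$; $\pi\{1:k\}=\{\pi(1),\ldots,\pi(k)\}$. A distribution $p$ on $S_n$ is $L$-decomposable if there exist a nonnegative function $\Lambda$ on pairs $(x,C)$ with $C\subset\{1,\ldots,n\}$, $x\notin C$, and a constant $c$ with $p(\pi)=c\prod_{k=0}^{n-1}\Lambda(\pi(k+1),\pi\{1:k\})$ for all $\pi$. $p$ is bi-decomposable if both $p$ and $\pi\mapsto p(\pi^{-1})$ are $L$-decomposable. *)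

(* Ground set {1,...,n} is encoded as 'I_n (value i <-> i+1). *)
From HB Require Import structures.
From mathcomp Require Import all_boot all_order all_algebra all_fingroup.
Set Implicit Arguments. Unset Strict Implicit. Unset Printing Implicit Defensive.
Import Order.TTheory GRing.Theory Num.Theory.
Local Open Scope ring_scope.

(* pi{1:k} = {pi(1),...,pi(k)}; in 0-indexed form: images of positions i < k *)
Definition prefix_set (n : nat) (pi : 'S_n) (k : nat) : {set 'I_n} :=
  [set pi i | i : 'I_n & (i < k)%N].

Definition L_decomposable (R : realFieldType) (n : nat) (p : 'S_n -> R) : Prop :=
  exists (Lambda : 'I_n -> {set 'I_n} -> R) (c : R),
    (forall (x : 'I_n) (C : {set 'I_n}), x \notin C -> 0 <= Lambda x C) /\
    (forall pi : 'S_n,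
       p pi = c * \prod_(k < n) Lambda (pi k) (prefix_set pi k)).

Definition bi_decomposable (R : realFieldType) (n : nat) (p : 'S_n -> R) : Prop :=
  L_decomposable p /\ L_decomposable (fun pi => p pi^-1%g).

(* r_x(pi) = |{ j <= x : pi^-1(j) <= pi^-1(x) }| (invariant under the 0/1 shift) *)
Definition rank_ins (n : nat) (pi : 'S_n) (x : 'I_n) : nat :=
  #|[set j : 'I_n | (j <= x)%N && ((pi^-1)%g j <= (pi^-1)%g x)%N]|.

(* repeated insertion model: theta is 1-indexed, theta r x for 1 <= r <= x <= n;
   the element x : 'I_n stands for x.+1 *)
Definition rim (R : realFieldType) (n : nat) (theta : nat -> nat -> R) (pi : 'S_n) : R :=
  \prod_(x : 'I_n) theta (rank_ins pi x) x.+1.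

Definition rim_Lambda (R : realFieldType) (n : nat) (theta : nat -> nat -> R)
  (x : 'I_n) (C : {set 'I_n}) : R :=
  theta (#|C :&: [set y : 'I_n | (y <= x)%N]|).+1 x.+1.

From HB Require Import structures.
From mathcomp Require Import all_boot all_order all_algebra all_fingroup.
Import Order.TTheory GRing.Theory Num.Theory.
Local Open Scope ring_scope.

(* The whole proof rests on one
   combinatorial identity: if x = pi(k+1) is the element inserted at step k,
   then its insertion rank r_x(pi) is one more than the number of elements
   smaller than x among the first k entries pi{1:k}  (rank_ins_at).
   Reindexing the defining product of p over x = pi(k+1) then gives the
   L-decomposition with Lambda(x, C) = theta(|C ∩ {1..x}| + 1, x).
   For the inverse permutation, r_k(pi^-1) = r_{pi(k)}(pi) (rank_ins_inv), and
   k+1 = |pi{1:k}| + 1, so p(pi^-1) factors with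
   Lambda'(x, C) = theta(|C ∩ {1..x}| + 1, |C| + 1).
   Nonnegativity of both Lambda's follows from the counting bounds
   |C ∩ {1..x}| < x and |C| < n whenever x is not in C, so that the theta
   arguments stay in the range where theta is nonnegative. *)

Lemma card_ord_lt {n k : nat} : (k <= n)%N -> #|[set i : 'I_n | (i < k)%N]| = k.
Proof.
move=> le_kn; rewrite -sum1dep_card.
by rewrite (big_ord_narrow_cond (P := predT)) sum1_card card_ord.
Qed.

Lemma mem_prefix_set (n : nat) (pi : 'S_n) (k : nat) (j : 'I_n) :
  (j \in prefix_set pi k) = ((pi^-1)%g j < k)%N.
Proof.
apply/imsetP/idP => [[i] | lt_jk]; first by rewrite inE => lt_ik ->; rewrite permK.
by exists ((pi^-1)%g j); rewrite ?inE ?permKV.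
Qed.

Lemma card_prefix_set (n : nat) (pi : 'S_n) (k : nat) :
  (k <= n)%N -> #|prefix_set pi k| = k.
Proof.
move=> le_kn; rewrite card_imset; last exact: perm_inj.
by rewrite -[RHS](card_ord_lt le_kn); apply: eq_card => i; rewrite !inE.
Qed.

Lemma rank_ins_at (n : nat) (pi : 'S_n) (k : 'I_n) :
  rank_ins pi (pi k) =
  (#|prefix_set pi k :&: [set y : 'I_n | (y <= pi k)%N]|).+1.
Proof.
rewrite /rank_ins permK.
have -> : [set j : 'I_n | (j <= pi k)%N && ((pi^-1)%g j <= k)%N] =
          pi k |: (prefix_set pi k :&: [set y : 'I_n | (y <= pi k)%N]).
  apply/setP => j; rewrite !inE mem_prefix_set.
  have [-> | ne_j] := eqVneq j (pi k); first by rewrite permK !leqnn.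
  rewrite /= andbC leq_eqVlt; congr (_ && _).
  suff /negbTE-> : (pi^-1)%g j != k :> nat by [].
  by apply: contra_neq ne_j => /val_inj <-; rewrite permKV.
by rewrite cardsU1 inE mem_prefix_set permK ltnn.
Qed.

Lemma rank_ins_inv (n : nat) (pi : 'S_n) (k : 'I_n) :
  rank_ins (pi^-1)%g k = rank_ins pi (pi k).
Proof.
rewrite /rank_ins invgK permK -[RHS](card_preimset _ (@perm_inj _ pi)).
by apply: eq_card => j; rewrite !inE permK andbC.
Qed.

Lemma L_decomposable_prod {R : realFieldType} {n : nat} (p : 'S_n -> R)
    (Lambda : 'I_n -> {set 'I_n} -> R) :
  (forall (x : 'I_n) (C : {set 'I_n}), x \notin C -> 0 <= Lambda x C) ->
  (forall pi : 'S_n, p pi = \prod_(k < n) Lambda (pi k) (prefix_set pi k)) ->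
  L_decomposable p.
Proof. by move=> Lambda_ge0 p_prod; exists Lambda, 1; split => // pi; rewrite mul1r. Qed.

(* If x is not in C, the elements of C below x lie in {0,...,x-1}. *)
Lemma card_below_notin (n : nat) (x : 'I_n) (C : {set 'I_n}) :
  x \notin C -> (#|C :&: [set y : 'I_n | (y <= x)%N]| <= x)%N.
Proof.
move=> xNC; rewrite -[X in (_ <= X)%N](card_ord_lt (ltnW (ltn_ord x))).
apply/subset_leq_card/subsetP => y; rewrite !inE => /andP[yC le_yx].
by rewrite ltn_neqAle le_yx andbT; apply: contraNneq xNC => /val_inj <-.
Qed.

Lemma card_notin_lt (n : nat) (x : 'I_n) (C : {set 'I_n}) :
  x \notin C -> (#|C| < n)%N.
Proof.
move=> xNC; rewrite -[X in (_ < X)%N]card_ord -cardsT; apply: proper_card.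
by rewrite properT; apply: contraNneq xNC => ->; rewrite inE.
Qed.

Definition rim_inv_Lambda {R : realFieldType} {n : nat} (theta : nat -> nat -> R)
    (x : 'I_n) (C : {set 'I_n}) : R :=
  theta (#|C :&: [set y : 'I_n | (y <= x)%N]|).+1 (#|C|).+1.

Section RepeatedInsertion.

Context {R : realFieldType} {n : nat} (theta : nat -> nat -> R).

Lemma rim_prod (pi : 'S_n) :
  rim theta pi = \prod_(k < n) rim_Lambda theta (pi k) (prefix_set pi k).
Proof.
rewrite /rim (reindex_inj (@perm_inj _ pi)).
by apply: eq_bigr => k _; rewrite rank_ins_at.
Qed.

Lemma rim_inv_prod (pi : 'S_n) :
  rim theta (pi^-1)%g =
  \prod_(k < n) rim_inv_Lambda theta (pi k) (prefix_set pi k).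
Proof.
apply: eq_bigr => k _.
by rewrite /rim_inv_Lambda rank_ins_inv rank_ins_at card_prefix_set // ltnW.
Qed.

Hypothesis theta_ge0 :
  forall x r : nat, (1 <= x <= n)%N -> (1 <= r <= x)%N -> 0 <= theta r x.

(* Both factors only evaluate theta at admissible arguments (r, x) with
   1 <= r <= x <= n, hence are nonnegative off the diagonal x \in C. *)
Lemma rim_Lambda_ge0 (x : 'I_n) (C : {set 'I_n}) :
  x \notin C -> 0 <= rim_Lambda theta x C.
Proof.
move=> xNC; apply: theta_ge0; first exact: ltn_ord.
by rewrite ltnS; apply/andP; split; last exact: card_below_notin.
Qed.

Lemma rim_inv_Lambda_ge0 (x : 'I_n) (C : {set 'I_n}) :
  x \notin C -> 0 <= rim_inv_Lambda theta x C.
Proof.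
move=> xNC; apply: theta_ge0; first exact: card_notin_lt xNC.
by rewrite ltnS; apply/andP; split; last exact/subset_leq_card/subsetIl.
Qed.

End RepeatedInsertion.

Theorem mainTheorem14 (R : realFieldType) (n : nat) (theta : nat -> nat -> R)
  (htheta : forall x : nat, (1 <= x <= n)%N ->
     (forall r : nat, (1 <= r <= x)%N -> 0 <= theta r x) /\
     \sum_(1 <= r < x.+1) theta r x = 1) :
  bi_decomposable (rim theta : 'S_n -> R) /\
  (forall pi : 'S_n,
     rim theta pi =
     \prod_(k < n) rim_Lambda theta (pi k) (prefix_set pi k)).
Proof.
have theta_ge0 x r : (1 <= x <= n)%N -> (1 <= r <= x)%N -> 0 <= theta r x.
  by move=> hx; apply: (htheta x hx).1.
split; last exact: rim_prod.
split.
- exact: L_decomposable_prod (rim_Lambda_ge0 _ theta_ge0) (rim_prod theta).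
- exact: L_decomposable_prod (rim_inv_Lambda_ge0 _ theta_ge0) (rim_inv_prod theta).
Qed.
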